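(* Let $\mathcal F$ be an exact category with enough injective objects and $\mathcal M$ a subcategory of $\mathcal F$. Then there exists a subcategory $\mathcal N$ such that $(\mathcal M,\mathcal N)$ is a complete cotorsion pair in $\mathcal F$ if and only if $\mathcal M$ is special precovering and idempotent complete (closed under direct summands) in $\mathcal F$.
   Context: A pair $(\mathcal M,\mathcal N)$ of full subcategories of an exact category $\mathcal F$ is a complete cotorsion pair if $\mathcal N=\mathrm{Ker}\,\mathrm{Ext}^1_{\mathcal F}(\mathcal M,-)$, $\mathcal M=\mathrm{Ker}\,\mathrm{Ext}^1_{\mathcal F}(-,\mathcal N)$, $\mathcal M$ is special precovering (every $X\in\mathcal F$ fits in a conflation $0\to N_1\to M_1\to X\to0$ with $M_1\in\mathcal M$, $N_1\in\mathcal N$) and $\mathcal N$ is special preenveloping (every $X$ fits in a conflation $0\to X\to N_2\to M_2\to0$ with $N_2\in\mathcal N$, $M_2\in\mathcal M$). For a single subcategory $\mathcal M$, ''special precovering'' means every $X\in\mathcal F$ fits in a conflation $0\to K\to M\to X\to 0$ with $M\in\mathcal M$ and $\mathrm{Ext}^1_{\mathcal F}(\mathcal M,K)=0$. *)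

From HB Require Import structures.
From mathcomp Require Import all_boot all_algebra.
Set Implicit Arguments. Unset Strict Implicit. Unset Printing Implicit Defensive.
Import GRing.Theory.
Local Open Scope ring_scope.

Record precat := PreCat {
  Ob :> Type;
  Hom : Ob -> Ob -> zmodType;
  comp : forall X Y Z : Ob, Hom Y Z -> Hom X Y -> Hom X Z;
  idm : forall X : Ob, Hom X X
}.
Arguments Hom {p}.
Arguments comp {p X Y Z}.
Arguments idm {p}.

Section CatDefs.
Variable C : precat.

Definition preadditive_axioms : Prop :=
  (forall (X Y Z W : C) (f : Hom Z W) (g : Hom Y Z) (h : Hom X Y),
      comp f (comp g h) = comp (comp f g) h) /\
  (forall (X Y : C) (f : Hom X Y), comp (idm Y) f = f) /\
  (forall (X Y : C) (f : Hom X Y), comp f (idm X) = f) /\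
  (forall (X Y Z : C) (f g : Hom Y Z) (h : Hom X Y),
      comp (f + g) h = comp f h + comp g h) /\
  (forall (X Y Z : C) (h : Hom Y Z) (f g : Hom X Y),
      comp h (f + g) = comp h f + comp h g).

Definition is_biprod (X Y P : C) (p1 : Hom P X) (p2 : Hom P Y)
  (e1 : Hom X P) (e2 : Hom Y P) : Prop :=
  comp p1 e1 = idm X /\ comp p2 e2 = idm Y /\
  comp p1 e2 = 0 /\ comp p2 e1 = 0 /\
  comp e1 p1 + comp e2 p2 = idm P.

(** additive category: preadditive, with a zero object and binary biproducts *)
Definition additive_axioms : Prop :=
  preadditive_axioms /\
  (exists Z : C, idm Z = 0) /\
  (forall X Y : C, exists (P : C) (p1 : Hom P X) (p2 : Hom P Y)
                          (e1 : Hom X P) (e2 : Hom Y P), is_biprod p1 p2 e1 e2).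

Definition is_iso (X Y : C) (f : Hom X Y) : Prop :=
  exists g : Hom Y X, comp g f = idm X /\ comp f g = idm Y.

Definition is_kernel (A B D : C) (i : Hom A B) (d : Hom B D) : Prop :=
  comp d i = 0 /\
  forall (T : C) (f : Hom T B), comp d f = 0 -> exists! g : Hom T A, comp i g = f.

Definition is_cokernel (A B D : C) (i : Hom A B) (d : Hom B D) : Prop :=
  comp d i = 0 /\
  forall (T : C) (f : Hom B T), comp f i = 0 -> exists! g : Hom D T, comp g d = f.

Definition kernel_cokernel_pair (A B D : C) (i : Hom A B) (d : Hom B D) : Prop :=
  is_kernel i d /\ is_cokernel i d.

(** pushout square:   A --i--> B
                      f|       |f'
                      A' -i'-> B'   *)
Definition is_pushout (A B A' B' : C) (i : Hom A B) (f : Hom A A')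
  (i' : Hom A' B') (f' : Hom B B') : Prop :=
  comp i' f = comp f' i /\
  forall (T : C) (g : Hom A' T) (h : Hom B T), comp g f = comp h i ->
    exists! u : Hom B' T, comp u i' = g /\ comp u f' = h.

(** pullback square:  B' --d'--> C'
                      f'|        |f
                      B  --d-->  D   *)
Definition is_pullback (B D B' C' : C) (d : Hom B D) (f : Hom C' D)
  (d' : Hom B' C') (f' : Hom B' B) : Prop :=
  comp d f' = comp f d' /\
  forall (T : C) (g : Hom T C') (h : Hom T B), comp f g = comp d h ->
    exists! u : Hom T B', comp d' u = g /\ comp f' u = h.

Section Exact.
Variable E : forall A B D : C, Hom A B -> Hom B D -> Prop.

Definition E_inflation (A B : C) (i : Hom A B) : Prop :=
  exists (D : C) (d : Hom B D), E i d.
Definition E_deflation (B D : C) (d : Hom B D) : Prop :=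
  exists (A : C) (i : Hom A B), E i d.

(** Quillen's axioms for an exact structure (as in Buehler, Def. 2.1) *)
Definition exact_structure_axioms : Prop :=
  (forall (A B D : C) (i : Hom A B) (d : Hom B D), E i d -> kernel_cokernel_pair i d) /\
  (forall (A B D A' B' D' : C) (i : Hom A B) (d : Hom B D) (i' : Hom A' B') (d' : Hom B' D')
          (a : Hom A A') (b : Hom B B') (c : Hom D D'),
      E i d -> is_iso a -> is_iso b -> is_iso c ->
      comp i' a = comp b i -> comp d' b = comp c d -> E i' d') /\
  (forall X : C, E_inflation (idm X)) /\
  (forall X : C, E_deflation (idm X)) /\
  (forall (X Y Z : C) (i : Hom X Y) (j : Hom Y Z),
      E_inflation i -> E_inflation j -> E_inflation (comp j i)) /\
  (forall (X Y Z : C) (d : Hom X Y) (e : Hom Y Z),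
      E_deflation d -> E_deflation e -> E_deflation (comp e d)) /\
  (forall (A B A' : C) (i : Hom A B) (f : Hom A A'), E_inflation i ->
      exists (B' : C) (i' : Hom A' B') (f' : Hom B B'),
        is_pushout i f i' f' /\ E_inflation i') /\
  (forall (B D C' : C) (d : Hom B D) (f : Hom C' D), E_deflation d ->
      exists (B' : C) (d' : Hom B' C') (f' : Hom B' B),
        is_pullback d f d' f' /\ E_deflation d').
End Exact.
End CatDefs.

Record exact_cat := ExactCat {
  ecat :> precat;
  ecat_additive : additive_axioms ecat;
  confl : forall A B D : ecat, Hom A B -> Hom B D -> Prop;
  confl_exact : exact_structure_axioms confl
}.
Arguments confl {e A B D}.

Section ExactNotions.
Variable F : exact_cat.

Definition inflation (A B : F) (i : Hom A B) : Prop := E_inflation (@confl F) i.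

(** Ext^1_F(X, Y) = 0, i.e. the Yoneda Ext group vanishes:
    every conflation 0 -> Y -> E -> X -> 0 splits. *)
Definition Ext1_zero (X Y : F) : Prop :=
  forall (Z : F) (i : Hom Y Z) (d : Hom Z X), confl i d ->
    exists s : Hom X Z, comp d s = idm X.

Definition injective_obj (I : F) : Prop :=
  forall (A B : F) (i : Hom A B), inflation i ->
    forall f : Hom A I, exists g : Hom B I, comp g i = f.

Definition enough_injectives : Prop :=
  forall X : F, exists (I : F) (i : Hom X I), injective_obj I /\ inflation i.

(** (full) subcategories are given by predicates on objects *)
Definition subcat := F -> Prop.

Definition special_precovering (M : subcat) : Prop :=
  forall X : F, exists (K M0 : F) (i : Hom K M0) (d : Hom M0 X),
    confl i d /\ M M0 /\ (forall M' : F, M M' -> Ext1_zero M' K).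

Definition closed_under_summands (M : subcat) : Prop :=
  forall (X Y P : F) (p1 : Hom P X) (p2 : Hom P Y) (e1 : Hom X P) (e2 : Hom Y P),
    is_biprod p1 p2 e1 e2 -> M P -> M X.

Definition complete_cotorsion_pair (M N : subcat) : Prop :=
  (forall Y : F, N Y <-> (forall X : F, M X -> Ext1_zero X Y)) /\
  (forall X : F, M X <-> (forall Y : F, N Y -> Ext1_zero X Y)) /\
  (forall X : F, exists (N1 M1 : F) (i : Hom N1 M1) (d : Hom M1 X),
      confl i d /\ M M1 /\ N N1) /\
  (forall X : F, exists (N2 M2 : F) (i : Hom X N2) (d : Hom N2 M2),
      confl i d /\ N N2 /\ M M2).
End ExactNotions.

From Pilot Require Import Defs.
From mathcomp Require Import all_boot all_algebra.
Import Defs.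
Set Implicit Arguments. Unset Strict Implicit. Unset Printing Implicit Defensive.
Import GRing.Theory.
Local Open Scope ring_scope.

(* The candidate partner is N := M^perp.  Necessity: conflations can be pulled
   back, so a map P -> X into the end of a conflation with kernel in M^perp
   lifts whenever P is in M; this gives special precovers and summand closure.
   Sufficiency: an object X with Ext^1(X, M^perp) = 0 splits its special
   M-precover K >-> M0 ->> X, so it is a summand of M0.  A special
   preenvelope of X is obtained by embedding X >-> I ->> C into an injective,
   taking a special precover K >-> M0 ->> C and pulling back along I ->> C:
   the pullback B sits in conflations X >-> B ->> M0 and K >-> B ->> I, and
   the latter puts B in M^perp because K does and I is injective. *)

Section ExactCategoryFacts.
Variable F : exact_cat.

Lemma compA (X Y Z W : F) (f : Hom Z W) (g : Hom Y Z) (h : Hom X Y) :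
  comp f (comp g h) = comp (comp f g) h.
Proof. by case: (ecat_additive F) => [[H _] _]; apply: H. Qed.

Lemma comp1l (X Y : F) (f : Hom X Y) : comp (idm Y) f = f.
Proof. by case: (ecat_additive F) => [[_ [H _]] _]; apply: H. Qed.

Lemma comp1r (X Y : F) (f : Hom X Y) : comp f (idm X) = f.
Proof. by case: (ecat_additive F) => [[_ [_ [H _]]] _]; apply: H. Qed.

Lemma compDl (X Y Z : F) (f g : Hom Y Z) (h : Hom X Y) :
  comp (f + g) h = comp f h + comp g h.
Proof. by case: (ecat_additive F) => [[_ [_ [_ [H _]]]] _]; apply: H. Qed.

Lemma compDr (X Y Z : F) (h : Hom Y Z) (f g : Hom X Y) :
  comp h (f + g) = comp h f + comp h g.
Proof. by case: (ecat_additive F) => [[_ [_ [_ [_ H]]]] _]; apply: H. Qed.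

Lemma comp0l (X Y Z : F) (f : Hom X Y) : comp (0 : Hom Y Z) f = 0.
Proof. by apply: (addIr (comp (0 : Hom Y Z) f)); rewrite -compDl !add0r. Qed.

Lemma comp0r (X Y Z : F) (f : Hom Y Z) : comp f (0 : Hom X Y) = 0.
Proof. by apply: (addIr (comp f (0 : Hom X Y))); rewrite -compDr !add0r. Qed.

Lemma compNl (X Y Z : F) (f : Hom Y Z) (h : Hom X Y) : comp (- f) h = - comp f h.
Proof. by apply: (addrI (comp f h)); rewrite -compDl !subrr comp0l. Qed.

Lemma compNr (X Y Z : F) (h : Hom Y Z) (f : Hom X Y) : comp h (- f) = - comp h f.
Proof. by apply: (addrI (comp h f)); rewrite -compDr !subrr comp0r. Qed.

Lemma unique_eq (T : Type) (P : T -> Prop) (x y : T) :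
  (exists! z, P z) -> P x -> P y -> x = y.
Proof. by move=> [z [_ U]] Px Py; rewrite -(U x Px) (U y Py). Qed.

Lemma iso_id (X : F) : is_iso (idm X).
Proof. by exists (idm X); rewrite comp1l. Qed.

Lemma kernel_monic (A B D T : F) (i : Hom A B) (d : Hom B D) (g1 g2 : Hom T A) :
  is_kernel i d -> comp i g1 = comp i g2 -> g1 = g2.
Proof.
move=> [di Ki] eq_ig; have U := Ki T (comp i g1).
by apply: (unique_eq (U _)) => //; rewrite compA di comp0l.
Qed.

Lemma cokernel_epi (A B D T : F) (i : Hom A B) (d : Hom B D) (g1 g2 : Hom D T) :
  is_cokernel i d -> comp g1 d = comp g2 d -> g1 = g2.
Proof.
move=> [di Ci] eq_gd; have U := Ci T (comp g1 d).
by apply: (unique_eq (U _)) => //; rewrite -compA di comp0r.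
Qed.

Lemma kernel_iso (A A' B D : F) (a : Hom A B) (b : Hom A' B) (d : Hom B D) :
  is_kernel a d -> is_kernel b d -> exists u : Hom A' A, is_iso u /\ comp a u = b.
Proof.
move=> Ka Kb.
have [u [au _]] := proj2 Ka _ b (proj1 Kb).
have [v [bv _]] := proj2 Kb _ a (proj1 Ka).
exists u; split=> //; exists v; split.
- by apply: (kernel_monic Kb); rewrite compA bv au comp1r.
- by apply: (kernel_monic Ka); rewrite compA au bv comp1r.
Qed.

Lemma pullback_jointly_monic (B D B' C' T : F) (d : Hom B D) (f : Hom C' D)
    (d' : Hom B' C') (f' : Hom B' B) (x y : Hom T B') :
  is_pullback d f d' f' -> comp d' x = comp d' y -> comp f' x = comp f' y -> x = y.
Proof.
move=> [sq P] dxy fxy.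
have /(P T) U : comp f (comp d' y) = comp d (comp f' y) by rewrite !compA sq.
exact: (unique_eq U).
Qed.

Lemma pullback_sym (B D B' C' : F) (d : Hom B D) (f : Hom C' D)
    (d' : Hom B' C') (f' : Hom B' B) :
  is_pullback d f d' f' -> is_pullback f d f' d'.
Proof.
move=> [sq P]; split=> [|T g h e]; first by rewrite sq.
have [u [[dg fh] U]] := P T h g (esym e).
by exists u; split=> // v [fv dv]; apply: U.
Qed.

Lemma pullback_iso (B D B' B'' C' : F) (d : Hom B D) (f : Hom C' D)
    (d' : Hom B' C') (f' : Hom B' B) (d'' : Hom B'' C') (f'' : Hom B'' B) :
  is_pullback d f d' f' -> is_pullback d f d'' f'' ->
  exists phi : Hom B'' B', [/\ is_iso phi, comp d' phi = d'' & comp f' phi = f''].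
Proof.
move=> pb pb''.
have [phi [[dphi fphi] _]] := proj2 pb _ d'' f'' (esym (proj1 pb'')).
have [psi [[dpsi fpsi] _]] := proj2 pb'' _ d' f' (esym (proj1 pb)).
exists phi; split=> //; exists psi; split.
- by apply: (pullback_jointly_monic pb''); rewrite compA ?dpsi ?fpsi ?dphi ?fphi comp1r.
- by apply: (pullback_jointly_monic pb); rewrite compA ?dpsi ?fpsi ?dphi ?fphi comp1r.
Qed.

Lemma pullback_kernel (A B D B' C' : F) (i : Hom A B) (d : Hom B D) (f : Hom C' D)
    (d' : Hom B' C') (f' : Hom B' B) :
  is_pullback d f d' f' -> is_kernel i d ->
  exists a : Hom A B', comp f' a = i /\ is_kernel a d'.
Proof.
move=> pb [di Ki].
have /(proj2 pb A) [a [[da fa] _]] : comp f 0 = comp d i by rewrite comp0r di.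
exists a; split=> //; split=> // T g dg.
have [h [ih Uh]] : exists! h : Hom T A, comp i h = comp f' g.
  by apply: Ki; rewrite compA (proj1 pb) -compA dg comp0r.
exists h; split.
- by apply: (pullback_jointly_monic pb); rewrite compA ?da ?fa ?comp0l.
- by move=> h' ah'; apply: Uh; rewrite -fa -compA ah'.
Qed.

Lemma confl_kernel (A B D : F) (i : Hom A B) (d : Hom B D) :
  confl i d -> is_kernel i d.
Proof. by case: (confl_exact F) => [H _] /H []. Qed.

Lemma confl_cokernel (A B D : F) (i : Hom A B) (d : Hom B D) :
  confl i d -> is_cokernel i d.
Proof. by case: (confl_exact F) => [H _] /H []. Qed.

Lemma confl_iso (A B D A' B' D' : F) (i : Hom A B) (d : Hom B D)
    (i' : Hom A' B') (d' : Hom B' D') (a : Hom A A') (b : Hom B B') (c : Hom D D') :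
  confl i d -> is_iso a -> is_iso b -> is_iso c ->
  comp i' a = comp b i -> comp d' b = comp c d -> confl i' d'.
Proof. by case: (confl_exact F) => [_ [H _]]; apply: H. Qed.

Lemma inflation_comp (X Y Z : F) (i : Hom X Y) (j : Hom Y Z) :
  inflation i -> inflation j -> inflation (comp j i).
Proof. by case: (confl_exact F) => [_ [_ [_ [_ [H _]]]]]; apply: H. Qed.

Lemma deflation_pullback (A B D C' : F) (i : Hom A B) (d : Hom B D) (f : Hom C' D) :
  confl i d -> exists (B' : F) (d' : Hom B' C') (f' : Hom B' B),
    is_pullback d f d' f' /\ E_deflation (@confl F) d'.
Proof.
case: (confl_exact F) => [_ [_ [_ [_ [_ [_ [_ H]]]]]]] Eid.
by apply: H; exists A, i.
Qed.

(* Axiom [E2op] only provides some pullback; by uniqueness of pullbacks and of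
   kernels, every pullback of a conflation is again a conflation. *)
Lemma confl_pullback (A B D C' B' : F) (i : Hom A B) (d : Hom B D) (f : Hom C' D)
    (d' : Hom B' C') (f' : Hom B' B) :
  confl i d -> is_pullback d f d' f' -> exists a : Hom A B', confl a d'.
Proof.
move=> Eid pb.
have [B'' [d'' [f'' [pb'' [A'' [a'' Ea'']]]]]] := deflation_pullback f Eid.
have [a [fa Ka]] := pullback_kernel pb (confl_kernel Eid).
have [a0 [fa0 Ka0]] := pullback_kernel pb'' (confl_kernel Eid).
have [u [iso_u a0u]] := kernel_iso Ka0 (confl_kernel Ea'').
have [phi [iso_phi dphi fphi]] := pullback_iso pb pb''.
have phi_a0 : comp phi a0 = a.
  apply: (pullback_jointly_monic pb); rewrite compA ?dphi ?fphi ?fa0 //.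
  by rewrite (proj1 Ka0) (proj1 Ka).
exists a; apply: (confl_iso Ea'' iso_u iso_phi (iso_id C')).
- by rewrite -a0u compA phi_a0.
- by rewrite dphi comp1l.
Qed.

Lemma split_confl_biprod (K M0 X : F) (i : Hom K M0) (d : Hom M0 X) (s : Hom X M0) :
  confl i d -> comp d s = idm X -> exists r : Hom M0 K, is_biprod d r s i.
Proof.
move=> Eid ds; have Ki := confl_kernel Eid.
have /(proj2 Ki) [r [ir _]] : comp d (idm M0 - comp s d) = 0.
  by rewrite compDr compNr comp1r compA ds comp1l subrr.
exists r; split; [exact: ds | split; [|split; [exact: (proj1 Ki) | split]]].
- apply: (kernel_monic Ki).
  by rewrite compA ir compDl compNl comp1l -compA (proj1 Ki) comp0r subr0 comp1r.
- apply: (kernel_monic Ki).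
  by rewrite compA ir compDl compNl comp1l -compA ds comp1r subrr comp0r.
- by rewrite ir addrC subrK.
Qed.

Lemma Ext1_zero_lift (M' K Z W : F) (i : Hom K Z) (d : Hom Z W) (s : Hom M' W) :
  Ext1_zero M' K -> confl i d -> exists t : Hom M' Z, comp d t = s.
Proof.
move=> ExtK Eid.
have [Q [c' [s' [pb _]]]] := deflation_pullback s Eid.
have [a Ea] := confl_pullback Eid pb.
have [tau c'tau] := ExtK _ _ _ Ea.
by exists (comp s' tau); rewrite compA (proj1 pb) -compA c'tau comp1r.
Qed.

Lemma Ext1_zero_summand (X Y P Y' : F) (p1 : Hom P X) (p2 : Hom P Y)
    (e1 : Hom X P) (e2 : Hom Y P) :
  is_biprod p1 p2 e1 e2 -> Ext1_zero P Y' -> Ext1_zero X Y'.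
Proof.
move=> [p1e1 _] ExtP Z i d Eid.
have [t dt] := Ext1_zero_lift p1 ExtP Eid.
by exists (comp t e1); rewrite compA dt p1e1.
Qed.

(* Complete the composite inflation K >-> B >-> Z to a conflation
   K >-> Z ->> W.  Injectivity of I gives a retraction r of the induced
   e : I -> W, and (1 - e r) c = sig q yields a section sig of the induced
   g : W -> M'.  Lifting sig along Z ->> W, possible as Ext^1(M', K) = 0,
   gives a section of Z ->> M'. *)
Lemma Ext1_zero_injective_quotient (K B I M' : F) (k : Hom K B) (p : Hom B I) :
  confl k p -> injective_obj I -> Ext1_zero M' K -> Ext1_zero M' B.
Proof.
move=> Ekp injI ExtK Z j q Ejq.
have [Kk Ck] := (confl_kernel Ekp, confl_cokernel Ekp).
have [Kj Cj] := (confl_kernel Ejq, confl_cokernel Ejq).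
have [W [c Ejkc]] : inflation (comp j k).
  by apply: inflation_comp; [exists I, p | exists M', q].
have Cjk := confl_cokernel Ejkc.
have [rho rhoj] : exists rho : Hom Z I, comp rho j = p by apply: injI; exists M', q.
have /(proj2 Ck) [e [ep _]] : comp (comp c j) k = 0 by rewrite -compA (proj1 Cjk).
have /(proj2 Cjk) [g [gc _]] : comp q (comp j k) = 0 by rewrite compA (proj1 Kj) comp0l.
have /(proj2 Cjk) [r [rc _]] : comp rho (comp j k) = 0 by rewrite compA rhoj (proj1 Kk).
have re : comp r e = idm I.
  by apply: (cokernel_epi Ck); rewrite -compA ep compA rc rhoj comp1l.
have ge : comp g e = 0.
  by apply: (cokernel_epi Ck); rewrite -compA ep compA gc (proj1 Kj) comp0l.
pose h := idm W - comp e r.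
have he : comp h e = 0 by rewrite compDl compNl comp1l -compA re comp1r subrr.
have /(proj2 Cj) [sig [sigq _]] : comp (comp h c) j = 0 by rewrite -compA -ep compA he comp0l.
have sig_g : comp sig g = h by apply: (cokernel_epi Cjk); rewrite -compA gc sigq.
have g_sig : comp g sig = idm M'.
  apply: (cokernel_epi Cj); rewrite -gc !compA -(compA g sig) sig_g.
  by rewrite compDr compNr comp1r compA ge comp0l subr0 comp1l.
have [t ct] := Ext1_zero_lift sig ExtK Ejkc.
by exists t; rewrite -gc -compA ct g_sig.
Qed.

End ExactCategoryFacts.

Section CotorsionPairs.
Variables (F : exact_cat) (M : subcat F).

Definition rperp : subcat F := fun Y => forall X, M X -> Ext1_zero X Y.

Lemma lperp_rperp (X : F) :
  special_precovering M -> closed_under_summands M ->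
  (forall Y, rperp Y -> Ext1_zero X Y) -> M X.
Proof.
move=> precov summands perpX.
have [K [M0 [i [d [Eid [MM0 K_perp]]]]]] := precov X.
have [s ds] := perpX K K_perp _ _ _ Eid.
have [r bp] := split_confl_biprod Eid ds.
exact: summands bp MM0.
Qed.

Lemma rperp_special_preenvelope (X : F) :
  enough_injectives F -> special_precovering M ->
  exists (N2 M2 : F) (i : Hom X N2) (d : Hom N2 M2), [/\ confl i d, rperp N2 & M M2].
Proof.
move=> injs precov.
have [I [iota [injI [C [pi Eip]]]]] := injs X.
have [K [M0 [k [d [Ekd [MM0 K_perp]]]]]] := precov C.
have [B [d' [f' [pb _]]]] := deflation_pullback pi Ekd.
have [k' Ek'] := confl_pullback Ekd pb.
have [x Ex] := confl_pullback Eip (pullback_sym pb).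
exists B, M0, x, f'; split=> // M' MM'.
exact: Ext1_zero_injective_quotient Ek' injI (K_perp M' MM').
Qed.

End CotorsionPairs.

Theorem mainTheorem10 (F : exact_cat) (hinj : enough_injectives F) (M : subcat F) :
  (exists N : subcat F, complete_cotorsion_pair M N) <->
  (special_precovering M /\ closed_under_summands M).
Proof.
split.
- move=> [N [perpN [perpM [cover _]]]]; split.
  + move=> X; have [N1 [M1 [i [d [Eid [MM1 NN1]]]]]] := cover X.
    by exists N1, M1, i, d; split=> //; split=> //; apply/perpN.
  + move=> X Y P p1 p2 e1 e2 bp MP; apply/perpM => Y' NY'.
    exact: Ext1_zero_summand bp (proj1 (perpM P) MP Y' NY').
- move=> [precov summands]; exists (rperp M); split; [by move=> Y; split | split; [|split]].
  + move=> X; split=> [MX Y NY | perpX]; first exact: NY X MX.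
    exact: lperp_rperp precov summands perpX.
  + move=> X; have [K [M0 [i [d [Eid [MM0 K_perp]]]]]] := precov X.
    by exists K, M0, i, d.
  + move=> X; have [N2 [M2 [i [d [Eid NN2 MM2]]]]] := rperp_special_preenvelope X hinj precov.
    by exists N2, M2, i, d.
Qed.
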